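(* Let $n\ge2$, and let $\mathcal K\subseteq\mathbb C^n$ be a subset such that for every $V\in\mathcal Z_n$ the set $\mathcal K\cap P^{-1}(V)$ has exactly one element. Then $\mathcal K$ is not closed in $(\mathbb C^n,d_\infty)$.
   Context: $\mathcal Z_n$ denotes the family of all multisets of complex numbers with exactly $n$ elements counted with multiplicity. $\mathbb C^n$ carries the metric $d_\infty(\mathbf u,\mathbf v)=\max_j|u_j-v_j|$. The map $P:\mathbb C^n\to\mathcal Z_n$ sends $(v_1,\dots,v_n)$ to the multiset $\{v_1,\dots,v_n\}$ (with multiplicities); thus the hypothesis says $\mathcal K$ contains exactly one ordering of each multiset of $n$ complex numbers. *)

From Stdlib Require Import Reals List Permutation.
From Coquelicot Require Import Coquelicot.
Open Scope R_scope.

Definition vec (n : nat) (u : list C) : Prop := length u = n.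

(* d_infty(u,v) < eps : all coordinatewise distances are < eps
   (for lists of equal length, this is max_j |u_j - v_j| < eps). *)
Definition dinf_lt (u v : list C) (eps : R) : Prop :=
  Forall2 (fun a b => Cmod (a - b) < eps) u v.

(* P u = P v  (same multiset of entries, with multiplicity) *)
Definition sameP (u v : list C) : Prop := Permutation u v.

Definition closed_dinf (n : nat) (K : list C -> Prop) : Prop :=
  forall x, vec n x ->
    (forall eps, 0 < eps -> exists y, K y /\ dinf_lt x y eps) -> K x.

(* Move the multiset {a, -a, 0, ..., 0} along a loop: a(t) runs from 1 through i
   to -1, avoiding 0.  If K were closed, the ordering u(t) chosen by K would vary
   continuously: there are only finitely many orderings, so orderings of nearby
   multisets, rescaled by a(m)/a(s), accumulate at an ordering of the multiset at m,
   which lies in K by closedness and is u(m) by uniqueness.  Hence the slot of u(t)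
   holding a(t) never changes.  But at t = 2 the multiset is the initial one again,
   so u(2) = u(0), and the slot that held a(0) = 1 would have to hold a(2) = -1. *)

From Stdlib Require Import Reals List Permutation Lra Lia Classical IndefiniteDescription.
From Coquelicot Require Import Coquelicot.
Open Scope R_scope.

Fixpoint insert_all {A} (x : A) (l : list A) : list (list A) :=
  match l with
  | nil => (x :: nil) :: nil
  | y :: l' => (x :: y :: l') :: map (cons y) (insert_all x l')
  end.

Lemma in_insert_all {A} (x : A) l1 l2 : In (l1 ++ x :: l2) (insert_all x (l1 ++ l2)).
Proof.
  induction l1 as [|y l1 IH]; simpl.
  - destruct l2; simpl; auto.
  - right. apply in_map. exact IH.
Qed.

Lemma Permutation_finite {A} (l : list A) :
  exists L, forall w, Permutation l w -> In w L.
Proof.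
  induction l as [|x l [L HL]].
  - exists (nil :: nil). intros w Hw. apply Permutation_nil in Hw. subst. simpl. auto.
  - exists (flat_map (insert_all x) L). intros w Hw.
    assert (Hx : In x w) by (apply (Permutation_in x Hw); simpl; auto).
    apply in_split in Hx as [l1 [l2 ->]].
    apply in_flat_map. exists (l1 ++ l2). split.
    + apply HL. exact (Permutation_cons_app_inv _ _ Hw).
    + apply in_insert_all.
Qed.

Lemma pigeonhole_near {S A} (P : S -> R -> Prop) (g : S -> A) (L : list A) :
  (forall s d d', P s d -> d <= d' -> P s d') ->
  (forall d, 0 < d -> exists s, P s d /\ In (g s) L) ->
  exists w, forall d, 0 < d -> exists s, P s d /\ g s = w.
Proof.
  intros P_mono. induction L as [|w0 L IH]; intros HL.
  - destruct (HL 1 Rlt_0_1) as [s [_ []]].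
  - destruct (classic (forall d, 0 < d -> exists s, P s d /\ g s = w0)) as [Hw0|Hw0].
    { exists w0. exact Hw0. }
    apply not_all_ex_not in Hw0 as [d0 Hd0].
    apply imply_to_and in Hd0 as [d0_pos not_w0].
    apply IH. intros d d_pos.
    destruct (HL (Rmin d d0) (Rmin_pos _ _ d_pos d0_pos)) as [s [Hs [Hg|Hg]]].
    + exfalso. apply not_w0. exists s. split; [|auto]. apply (P_mono s _ _ Hs), Rmin_r.
    + exists s. split; [|exact Hg]. apply (P_mono s _ _ Hs), Rmin_l.
Qed.

Lemma Cmod_le_Rabs_sum (z : C) : Cmod z <= Rabs (fst z) + Rabs (snd z).
Proof.
  destruct z as [x y]. unfold Cmod; cbn [fst snd].
  pose proof (Rabs_pos x); pose proof (Rabs_pos y).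
  rewrite <- (sqrt_pow2 (Rabs x + Rabs y)) by lra.
  apply sqrt_le_1_alt. rewrite <- (pow2_abs x), <- (pow2_abs y). nra.
Qed.

Definition Vpair (n : nat) (x : C) : list C := (x :: - x :: repeat (RtoC 0) (n - 2))%C.

Lemma Vpair_vec n x : (2 <= n)%nat -> vec n (Vpair n x).
Proof. intros. unfold vec, Vpair. simpl. rewrite repeat_length. lia. Qed.

Lemma Vpair_scale n c x : map (Cmult c) (Vpair n x) = Vpair n (c * x)%C.
Proof.
  unfold Vpair. simpl. rewrite map_repeat, Cmult_0_r. f_equal. f_equal. ring.
Qed.

Lemma Vpair_opp n x : Permutation (Vpair n (- x)%C) (Vpair n x).
Proof. unfold Vpair. replace (- - x)%C with x by ring. apply perm_swap. Qed.

Lemma Cmod_in_Vpair n x z : In z (Vpair n x) -> Cmod z <= Cmod x.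
Proof.
  intros [<-|[<-|Hz]].
  - lra.
  - rewrite Cmod_opp. lra.
  - apply repeat_spec in Hz as ->. rewrite Cmod_0. apply Cmod_ge_0.
Qed.

Lemma dinf_lt_scale (x y : C) (l : list C) (eps : R) :
  x <> 0%C -> Cmod (y - x)%C < eps -> (forall z, In z l -> Cmod z <= Cmod x) ->
  dinf_lt (map (Cmult (y / x)%C) l) l eps.
Proof.
  intros x_neq0 yx_lt l_le. unfold dinf_lt.
  induction l as [|z l IH]; constructor.
  - replace (y / x * z - z)%C with ((y - x) * (z / x))%C by (field; exact x_neq0).
    rewrite Cmod_mult, Cmod_div by exact x_neq0.
    assert (Hx : 0 < Cmod x) by now apply Cmod_gt_0.
    assert (Cmod z / Cmod x <= 1).
    { apply (Rdiv_le_1 _ _ Hx). apply l_le. simpl. auto. }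
    pose proof (Cmod_ge_0 (y - x)). pose proof (Cmod_ge_0 z). nra.
  - apply IH. intros w Hw. apply l_le. simpl. auto.
Qed.

(* The broken line 1 -> i -> -1. *)
Definition loop_path (t : R) : C := (1 - t, 1 - Rabs (1 - t)).

Lemma loop_path_neq0 t : loop_path t <> 0%C.
Proof.
  unfold loop_path, RtoC. intro H. injection H as H1 H2.
  rewrite H1, Rabs_R0 in H2. lra.
Qed.

Lemma loop_path_end : loop_path 2 = (- loop_path 0)%C.
Proof.
  unfold loop_path, Copp; simpl.
  replace (1 - 2) with (- 1) by lra. replace (1 - 0) with 1 by lra.
  rewrite Rabs_R1, Rabs_left by lra. f_equal; lra.
Qed.

Lemma loop_path_lipschitz m s :
  Cmod (loop_path m - loop_path s)%C <= 2 * Rabs (m - s).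
Proof.
  eapply Rle_trans; [apply Cmod_le_Rabs_sum|]. simpl.
  replace (1 - m + - (1 - s)) with (- (m - s)) by lra.
  replace (1 - Rabs (1 - m) + - (1 - Rabs (1 - s)))
    with (- (Rabs (1 - m) - Rabs (1 - s))) by lra.
  rewrite !Rabs_Ropp.
  pose proof (Rabs_triang_inv2 (1 - m) (1 - s)) as H.
  replace (1 - m - (1 - s)) with (- (m - s)) in H by lra.
  rewrite Rabs_Ropp in H. lra.
Qed.

Lemma loop_path_continuous m eps : 0 < eps ->
  exists d, 0 < d /\ forall s, Rabs (s - m) < d -> Cmod (loop_path m - loop_path s)%C < eps.
Proof.
  intros eps_pos. exists (eps / 2). split; [lra|]. intros s Hs.
  pose proof (loop_path_lipschitz m s). rewrite Rabs_minus_sym in Hs. lra.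
Qed.

Lemma interval_clopen (P : R -> Prop) (a b : R) :
  a <= b -> P a ->
  (forall m, a <= m <= b ->
     (forall d, 0 < d -> exists s, a <= s <= b /\ Rabs (s - m) < d /\ P s) -> P m) ->
  (forall m, a <= m <= b -> P m ->
     exists d, 0 < d /\ forall s, a <= s <= b -> Rabs (s - m) < d -> P s) ->
  P b.
Proof.
  intros ab Pa P_closed P_open.
  set (E := fun t => a <= t <= b /\ forall s, a <= s <= t -> P s).
  assert (Ea : E a).
  { split; [lra|]. intros s Hs. replace s with a by lra. exact Pa. }
  destruct (completeness E) as [m [m_ub m_lub]].
  { exists b. intros t [Ht _]. lra. }
  { exists a. exact Ea. }
  assert (am : a <= m) by (apply m_ub, Ea).
  assert (mb : m <= b) by (apply m_lub; intros t [Ht _]; lra).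
  assert (P_below : forall s, a <= s < m -> P s).
  { intros s Hs. apply NNPP. intros not_Ps.
    enough (m <= s) by lra.
    apply m_lub. intros t [_ Pt]. apply Rnot_lt_le. intros st. apply not_Ps, Pt. lra. }
  assert (Pm : P m).
  { apply P_closed; [lra|]. intros d d_pos.
    destruct (Req_dec m a) as [-> | m_neq_a].
    { exists a. rewrite Rminus_diag, Rabs_R0. repeat split; auto; lra. }
    exists (Rmax a (m - d / 2)).
    pose proof (Rmax_l a (m - d / 2)). pose proof (Rmax_r a (m - d / 2)).
    assert (Rmax a (m - d / 2) < m) by (apply Rmax_lub_lt; lra).
    rewrite Rabs_left by lra. repeat split; try lra. apply P_below. lra. }
  destruct (Rle_lt_dec b m) as [bm | mb'].
  { replace b with m by lra. exact Pm. }
  exfalso. destruct (P_open m (conj am mb) Pm) as [d [d_pos Hd]].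
  pose proof (Rmin_l (m + d / 2) b). pose proof (Rmin_r (m + d / 2) b).
  set (t := Rmin (m + d / 2) b) in *.
  assert (m < t) by (apply Rmin_glb_lt; lra).
  enough (E t) by (assert (t <= m) by (apply m_ub; auto); lra).
  split; [lra|]. intros s Hs. destruct (Rlt_le_dec s m).
  - apply P_below. lra.
  - apply Hd; [lra|]. rewrite Rabs_right by lra. lra.
Qed.

Section Monodromy.

Variables (n : nat) (K : list C -> Prop) (a : R -> C) (u : R -> list C).

Hypothesis n_ge2 : (2 <= n)%nat.
Hypothesis K_closed : closed_dinf n K.
Hypothesis K_unique : forall V w1 w2,
  K w1 -> K w2 -> Permutation w1 V -> Permutation w2 V -> w1 = w2.
Hypothesis a_neq0 : forall t, a t <> 0%C.
Hypothesis a_continuous : forall m eps, 0 < eps ->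
  exists d, 0 < d /\ forall s, Rabs (s - m) < d -> Cmod (a m - a s)%C < eps.
Hypothesis u_in_K : forall t, K (u t).
Hypothesis u_perm : forall t, Permutation (u t) (Vpair n (a t)).

Lemma ordering_rescale (B : R -> Prop) m :
  (forall d, 0 < d -> exists s, Rabs (s - m) < d /\ B s) ->
  exists s, B s /\ u m = map (Cmult (a m / a s)%C) (u s).
Proof.
  intros B_near.
  set (g := fun s => map (Cmult (a m / a s)%C) (u s)).
  assert (g_perm : forall s, Permutation (g s) (Vpair n (a m))).
  { intro s. replace (a m) with (a m / a s * a s)%C by (field; apply a_neq0).
    rewrite <- Vpair_scale. apply Permutation_map, u_perm. }
  destruct (Permutation_finite (Vpair n (a m))) as [L HL].
  destruct (pigeonhole_near (fun s d => Rabs (s - m) < d /\ B s) g L) as [w Hw].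
  - intros s d d' [Hs Bs] dd'. split; [lra | exact Bs].
  - intros d d_pos. destruct (B_near d d_pos) as [s Hs]. exists s.
    split; [exact Hs|]. apply HL, Permutation_sym, g_perm.
  - assert (w_perm : Permutation w (Vpair n (a m))).
    { destruct (Hw 1 Rlt_0_1) as [s [_ <-]]. apply g_perm. }
    assert (w_in_K : K w).
    { apply K_closed.
      - unfold vec. rewrite (Permutation_length w_perm). apply Vpair_vec, n_ge2.
      - intros eps eps_pos. destruct (a_continuous m eps eps_pos) as [d [d_pos Hd]].
        destruct (Hw d d_pos) as [s [[Hs _] <-]]. exists (u s). split; [apply u_in_K|].
        apply dinf_lt_scale; [apply a_neq0 | apply Hd, Hs |].
        intros z Hz. apply (Cmod_in_Vpair n). exact (Permutation_in _ (u_perm s) Hz). }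
    destruct (Hw 1 Rlt_0_1) as [s [[_ Bs] gs]]. exists s. split; [exact Bs|].
    fold (g s). rewrite gs. apply (K_unique (Vpair n (a m))); auto.
Qed.

Lemma position_agrees_near (B : R -> Prop) m p :
  (forall d, 0 < d -> exists s, Rabs (s - m) < d /\ B s) ->
  exists s, B s /\
    (nth p (u m) (RtoC 0) = a m <-> nth p (u s) (RtoC 0) = a s).
Proof.
  intros B_near. destruct (ordering_rescale B m B_near) as [s [Bs um]].
  exists s. split; [exact Bs|].
  rewrite um, <- (Cmult_0_r (a m / a s)), map_nth, Cmult_0_r.
  pose proof (a_neq0 m) as am_neq0. pose proof (a_neq0 s) as as_neq0.
  split; intros Hp.
  - replace (nth p (u s) (RtoC 0)) with (a s / a m * (a m / a s * nth p (u s) (RtoC 0)))%C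
      by (field; auto).
    rewrite Hp. field. auto.
  - rewrite Hp. field. auto.
Qed.

Lemma ordering_follows_path t0 t1 p : t0 <= t1 ->
  nth p (u t0) (RtoC 0) = a t0 -> nth p (u t1) (RtoC 0) = a t1.
Proof.
  intros t01 Pt0.
  apply (interval_clopen (fun s => nth p (u s) (RtoC 0) = a s) t0 t1 t01 Pt0).
  - intros m _ P_near.
    destruct (position_agrees_near (fun s => t0 <= s <= t1 /\ nth p (u s) (RtoC 0) = a s) m p)
      as [s [[_ Ps] Pms]].
    { intros d d_pos. destruct (P_near d d_pos) as [s [Hs [Hsm Ps]]]. exists s. auto. }
    apply Pms, Ps.
  - intros m _ Pm. apply NNPP. intros not_open.
    destruct (position_agrees_near (fun s => nth p (u s) (RtoC 0) <> a s) m p)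
      as [s [not_Ps Pms]].
    { intros d d_pos. apply NNPP. intros no_s. apply not_open. exists d. split; [exact d_pos|].
      intros s _ Hs. apply NNPP. intros not_Ps. apply no_s. exists s. auto. }
    apply not_Ps, Pms, Pm.
Qed.

End Monodromy.

Theorem theorem4p2 (n : nat) (K : list C -> Prop) :
  (2 <= n)%nat ->
  (forall u, K u -> vec n u) ->
  (forall V, vec n V ->
     exists u, (K u /\ sameP u V) /\
       forall w, K w -> sameP w V -> w = u) ->
  ~ closed_dinf n K.
Proof.
  intros n_ge2 K_vec K_ordering K_closed.
  assert (K_unique : forall V w1 w2,
    K w1 -> K w2 -> Permutation w1 V -> Permutation w2 V -> w1 = w2).
  { intros V w1 w2 K1 K2 P1 P2. destruct (K_ordering V) as [w [_ Hw]].
    - unfold vec. rewrite <- (Permutation_length P1). apply K_vec, K1.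
    - rewrite (Hw w1), (Hw w2); auto. }
  destruct (functional_choice
              (fun t w => K w /\ Permutation w (Vpair n (loop_path t)))) as [u Hu].
  { intro t. destruct (K_ordering _ (Vpair_vec n (loop_path t) n_ge2)) as [w [Hw _]].
    exists w. exact Hw. }
  destruct (In_nth (u 0) (loop_path 0) (RtoC 0)) as [p [_ Hp]].
  { apply (Permutation_in _ (Permutation_sym (proj2 (Hu 0)))). simpl. auto. }
  assert (u_loop : u 2 = u 0).
  { apply (K_unique (Vpair n (loop_path 0))); try apply Hu.
    eapply perm_trans; [apply Hu|]. rewrite loop_path_end. apply Vpair_opp. }
  pose proof (ordering_follows_path n K loop_path u n_ge2 K_closed K_unique loop_path_neq0
                loop_path_continuous (fun t => proj1 (Hu t)) (fun t => proj2 (Hu t))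
                0 2 p ltac:(lra) Hp) as Hp2.
  rewrite u_loop, Hp, loop_path_end in Hp2.
  unfold loop_path, Copp in Hp2. injection Hp2. lra.
Qed.
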